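(* Let $G$ be a finitely generated group and $S$ a finite generating set of $G$ closed under inverses, and let $\Delta(n)=\Delta_S(n)$ be as defined in the context. Then $\Delta(n)\le \lceil n/3\rceil$ for all $n\ge 1$. Moreover, if there is $N$ such that $\Delta(n)<\lceil n/3\rceil$ for all $n\ge N$, then $G$ is finitely presented and satisfies an exponential isoperimetric inequality: there is a finite presentation $\langle S\mid \mathcal R\rangle$ of $G$ and a constant $c$ such that every word $w$ in $S$ of length $n$ representing the identity of $G$ is freely equivalent to a product of at most $c^n$ conjugates of elements of $\mathcal R$ and their inverses.
   Context: Let $G$ be a finitely generated group, $S$ a finite generating set closed under inverses, and $\Gamma$ the Cayley diagram (there is an edge labelled $s$ from $g$ to $gs$ for $g\in G$, $s\in S$). The word metric $d(g,g')$ is the length of a shortest word in $S$ representing $g^{-1}g'$. A path of length $n\ge1$ in $\Gamma$ is a sequence $g_0,\dots,g_n$ of group elements with an edge of $\Gamma$ from each $g_{i-1}$ to $g_i$; it is a cycle if $g_n=g_0$. A (diagonal) triangulation of a circle in the plane is obtained by distinguishing one or more points on the circle and joining some of them by chords such that (1) no two chords meet in the interior of the circle, (2) the interior is divided into triangles, (3) each arc of the circle between two neighbouring distinguished points is one side of a triangle; circles with one, two or three distinguished points count as triangulated with no chords. A triangulation of a cycle $g_0,\dots,g_n$ in $\Gamma$ is a triangulation of a circle with distinguished points $p_1,\dots,p_n$, labelled $g_1,\dots,g_n$ in counterclockwise order. The length of a chord with endpoints $p_i,p_j$ is $d(g_i,g_j)$. A $k$-triangulation is one in which all chords have length at most $k$.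 $\Delta(n)=\Delta_S(n)$ is the least $k$ such that every cycle in $\Gamma$ of length at most $n$ has a $k$-triangulation (so $\Delta(n)=0$ for $1\le n\le3$). $\lceil x\rceil$ is the least integer not less than $x$. *)

From Stdlib Require Import List Arith Relations.
Import ListNotations.

Record group := Group {
  carrier :> Type;
  mul : carrier -> carrier -> carrier;
  inv : carrier -> carrier;
  one : carrier;
  mulA : forall x y z, mul x (mul y z) = mul (mul x y) z;
  mul1g : forall x, mul one x = x;
  mulg1 : forall x, mul x one = x;
  mulVg : forall x, mul (inv x) x = one;
  mulgV : forall x, mul x (inv x) = one
}.

Arguments mul {g}. Arguments inv {g}. Arguments one {g}.

Section Defs.
Variable G : group.
Variable S : list G.

Definition inS (s : G) : Prop := In s S.

Definition prodw (w : list G) : G := fold_right mul one w.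

Definition dist_le (g g' : G) (k : nat) : Prop :=
  exists w : list G, Forall inS w /\ length w <= k /\ prodw w = mul (inv g) g'.

(** labels g_1, ..., g_n of the path starting at g_0 = g and reading w *)
Fixpoint labels (g : G) (w : list G) : list G :=
  match w with
  | [] => []
  | s :: w' => mul g s :: labels (mul g s) w'
  end.

(** [ktri k l] : the circle whose distinguished points, in counterclockwise
    order, carry the labels [l] has a k-triangulation.  The arc from the last
    point back to the first is the "base" side; it lies in a unique triangle
    with apex [z], which splits the disc into two triangulated sub-discs.
    Sides of that triangle which are not arcs are chords, of length <= k. *)
Inductive ktri (k : nat) : list G -> Prop :=
| ktri_small l : length l <= 3 -> ktri k l
| ktri_split x p z q y :
    ktri k (x :: p ++ [z]) ->
    ktri k (z :: q ++ [y]) ->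
    (p <> [] -> dist_le x z k) ->
    (q <> [] -> dist_le z y k) ->
    ktri k (x :: p ++ z :: q ++ [y]).

(** [Delta_le n k] : every cycle of length at most n in the Cayley diagram
    has a k-triangulation; i.e. Delta_S(n) <= k. *)
Definition Delta_le (n k : nat) : Prop :=
  forall (g0 : G) (w : list G),
    1 <= length w <= n -> Forall inS w -> mul g0 (prodw w) = g0 ->
    ktri k (labels g0 w).

Definition letter := (G * bool)%type.
Definition linv (a : letter) : letter := (fst a, negb (snd a)).
Definition winv (u : list letter) : list letter := rev (map linv u).
Definition leval (a : letter) : G := if snd a then fst a else inv (fst a).
Definition evalw (u : list letter) : G := fold_right mul one (map leval u).
Definition letters_in_S (u : list letter) : Prop := Forall (fun a => inS (fst a)) u.

Inductive fred : list letter -> list letter -> Prop :=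
| fred_step u a v : fred (u ++ a :: linv a :: v) (u ++ v).
Definition freeeq : list letter -> list letter -> Prop :=
  clos_refl_sym_trans (list letter) fred.

Definition conj_prod (L : list (list letter * list letter * bool)) : list letter :=
  flat_map (fun t : list letter * list letter * bool =>
     let u := fst (fst t) in let r := snd (fst t) in
     u ++ (if snd t then r else winv r) ++ winv u) L.

Definition conseq_le (R : list (list letter)) (w : list letter) (m : nat) : Prop :=
  exists L : list (list letter * list letter * bool),
    length L <= m /\
    Forall (fun t : list letter * list letter * bool =>
              letters_in_S (fst (fst t)) /\ In (snd (fst t)) R) L /\
    freeeq w (conj_prod L).

End Defs.

Arguments Delta_le {G}. Arguments conseq_le {G}. Arguments letters_in_S {G}.
Arguments evalw {G}. Arguments prodw {G}. Arguments inS {G}.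

Definition ceil3 (n : nat) : nat := (n + 2) / 3.

From Stdlib Require Import List Arith Lia Relations Classical Setoid Morphisms.
Import ListNotations.

(* Part one: cut the cycle at a point z about a third of the way back from its end.  The
   triangle on the base side with apex z has chords of length at most ceil(n/3) (one of
   them measured backwards around the cycle), and the two remaining polygons have at most
   2 ceil(n/3) + 1 vertices, so they are triangulated by chords joining vertices at most
   ceil(n/3) apart along the path.

   Part two: if Delta(n) <= k with 3k < n, every k-triangulation of a relator u of length n
   contains a chord of length <= k cutting off an arc w2 of length between k + 1 and 2k.
   Replacing w2 by the word P of the chord writes u = w1 w2 w3 as the product of the
   relator w1 P w3 and a conjugate of w2 P^-1, both shorter than u.  By induction every
   relator is a product of at most 2^n conjugates of relators of bounded length, and there
   are only finitely many of those. *)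

Arguments dist_le {G}. Arguments ktri {G}. Arguments labels {G}.
Arguments linv {G}. Arguments winv {G}. Arguments leval {G}.
Arguments fred {G}. Arguments freeeq {G}. Arguments conj_prod {G}.

Section GroupWords.
Variable G : group.

Lemma inv_unique (a b : G) : mul a b = one -> inv a = b.
Proof. intro H. now rewrite <- (mulg1 G (inv a)), <- H, mulA, mulVg, mul1g. Qed.

Lemma inv_involutive (a : G) : inv (inv a) = a.
Proof. apply inv_unique, mulVg. Qed.

Lemma inv_mul (a b : G) : inv (mul a b) = mul (inv b) (inv a).
Proof. apply inv_unique. now rewrite mulA, <- (mulA _ a b), mulgV, mulg1, mulgV. Qed.

Lemma prodw_app (u v : list G) : prodw (u ++ v) = mul (prodw u) (prodw v).
Proof.
  induction u as [|s u IH]; simpl; [now rewrite mul1g|].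
  change (mul s (prodw (u ++ v)) = mul (mul s (prodw u)) (prodw v)).
  now rewrite IH, mulA.
Qed.

Lemma prodw_rev_map_inv (u : list G) : prodw (rev (map inv u)) = inv (prodw u).
Proof.
  induction u as [|s u IH]; simpl.
  - symmetry. apply inv_unique, mul1g.
  - rewrite prodw_app, IH, inv_mul. simpl. now rewrite mulg1.
Qed.

Lemma labels_length (g : G) w : length (labels g w) = length w.
Proof. revert g; induction w; simpl; auto. Qed.

Lemma labels_app (g : G) u v :
  labels g (u ++ v) = labels g u ++ labels (mul g (prodw u)) v.
Proof.
  revert g; induction u as [|s u IH]; intro g; simpl.
  - now rewrite mulg1.
  - change (prodw (s :: u)) with (mul s (prodw u)). now rewrite IH, mulA.
Qed.

Lemma labels_snoc (g : G) u t :
  labels g (u ++ [t]) = labels g u ++ [mul g (prodw (u ++ [t]))].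
Proof. rewrite labels_app, (prodw_app u). simpl. now rewrite mulg1, mulA. Qed.

Lemma labels_cons_eq_app (w : list G) h l1 a l2 :
  h :: labels h w = l1 ++ a :: l2 ->
  exists w1 w2, w = w1 ++ w2 /\ length w1 = length l1 /\ a = mul h (prodw w1) /\
                l2 = labels a w2.
Proof.
  revert h l1; induction w as [|s w IH]; intros h [|c l1] E; simpl in E;
    injection E; clear E; intros.
  - subst. exists [], []. simpl. now rewrite mulg1.
  - destruct l1; discriminate.
  - subst. exists [], (s :: w). simpl. now rewrite mulg1.
  - destruct (IH _ _ H) as (w1 & w2 & -> & Hlen & -> & ->).
    exists (s :: w1), w2. simpl. now rewrite Hlen, mulA.
Qed.

Lemma labels_cons_chord (w : list G) h l1 a M b l3 :
  h :: labels h w = l1 ++ a :: M ++ b :: l3 ->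
  exists w1 w2 w3, w = w1 ++ w2 ++ w3 /\ length w2 = length M + 1 /\
                   prodw w2 = mul (inv a) b.
Proof.
  intro E.
  destruct (labels_cons_eq_app w h l1 a _ E) as (w1 & w23 & -> & _ & _ & E').
  assert (E'' : a :: labels a w23 = (a :: M) ++ b :: l3) by now rewrite <- E'.
  destruct (labels_cons_eq_app w23 a (a :: M) b l3 E'') as (w2 & w3 & -> & Hlen & -> & _).
  exists w1, w2, w3. simpl in Hlen. split; [reflexivity|split; [lia|]].
  now rewrite mulA, mulVg, mul1g.
Qed.

End GroupWords.

Section Triangulations.
Variables (G : group) (S : list G).

Lemma dist_le_mono (a b : G) k k' : dist_le S a b k -> k <= k' -> dist_le S a b k'.
Proof. intros (w & Hw & Hl & Hp) Hk. exists w. repeat split; auto; lia. Qed.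

Lemma dist_le_trans (a b c : G) k l :
  dist_le S a b k -> dist_le S b c l -> dist_le S a c (k + l).
Proof.
  intros (u & Hu & Hul & Hup) (v & Hv & Hvl & Hvp). exists (u ++ v).
  rewrite Forall_app, length_app, prodw_app, Hup, Hvp. repeat split; auto; [lia|].
  now rewrite <- mulA, (mulA _ b), mulgV, mul1g.
Qed.

Definition arc_bounded (l : list G) : Prop :=
  forall l1 a M b l3, l = l1 ++ a :: M ++ b :: l3 -> dist_le S a b (length M + 1).

Lemma arc_bounded_infix l1 l2 l3 : arc_bounded (l1 ++ l2 ++ l3) -> arc_bounded l2.
Proof.
  intros H L1 a M b L3 ->. apply (H (l1 ++ L1) a M b (L3 ++ l3)).
  rewrite <- !app_assoc. simpl. now rewrite <- !app_assoc.
Qed.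

Lemma arc_bounded_split l1 x p z q y :
  arc_bounded (l1 ++ x :: p ++ z :: q ++ [y]) ->
  arc_bounded (x :: p ++ [z]) /\ arc_bounded (z :: q ++ [y]) /\
  dist_le S x z (length p + 1) /\ dist_le S z y (length q + 1).
Proof.
  intro H. repeat split.
  - apply (arc_bounded_infix l1 _ (q ++ [y])). simpl. now rewrite <- app_assoc.
  - apply (arc_bounded_infix (l1 ++ x :: p) _ []). now rewrite app_nil_r, <- app_assoc.
  - now apply (H l1 x p z (q ++ [y])).
  - apply (H (l1 ++ x :: p) z q y []). now rewrite <- app_assoc.
Qed.

Lemma arc_bounded_labels (h : G) w : Forall (inS S) w -> arc_bounded (h :: labels h w).
Proof.
  intros Hw l1 a M b l3 E.
  destruct (labels_cons_chord G w h l1 a M b l3 E) as (w1 & w2 & w3 & -> & Hlen & Hp).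
  exists w2. rewrite !Forall_app in Hw. repeat split; [tauto | lia | exact Hp].
Qed.

Lemma ktri_mono k k' l : ktri S k l -> k <= k' -> ktri S k' l.
Proof.
  intros H Hk; induction H.
  - now constructor.
  - constructor 2; auto; intros Hn; eapply dist_le_mono; eauto.
Qed.

Lemma list_split_at {A : Type} (l : list A) i :
  i + 2 <= length l ->
  exists x p z q, l = x :: p ++ z :: q /\ length p = i /\ length q = length l - i - 2.
Proof.
  intro Hl. destruct l as [|x l]; simpl in Hl; [lia|].
  destruct (skipn i l) as [|z q] eqn:E.
  - apply (f_equal (@length A)) in E. rewrite length_skipn in E. simpl in E. lia.
  - exists x, (firstn i l), z, q. apply (f_equal (@length A)) in E as Eq.
    rewrite length_skipn in Eq. simpl in Eq. rewrite length_firstn.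
    split; [now rewrite <- E, firstn_skipn | cbn [length]; lia].
Qed.

(* The apex z sits min(k, n - 3) steps after the first vertex, so that both chords of the
   base triangle have length at most k. *)
Lemma ktri_of_arc_bounded k l : arc_bounded l -> length l <= 2 * k + 1 -> ktri S k l.
Proof.
  remember (length l) as n eqn:En. revert l En.
  induction n as [n IH] using lt_wf_ind; intros l En Harc Hn.
  destruct (le_lt_dec n 3) as [Hs|Hs]; [constructor; lia|].
  destruct (exists_last (l := l)) as (l0 & y & ->); [intros ->; simpl in En; lia|].
  rewrite length_app in En; simpl in En.
  destruct (list_split_at l0 (Nat.min (k - 1) (n - 4))) as (x & p & z & q & -> & Hp & Hq);
    [lia|].
  simpl in Harc |- *.
  rewrite <- app_assoc in Harc |- *. simpl in Harc |- *.
  destruct (arc_bounded_split [] x p z q y Harc) as (Hl & Hr & Hxz & Hzy).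
  apply ktri_split.
  - apply (IH (length p + 2)); auto; [lia | simpl; rewrite length_app; simpl; lia | lia].
  - apply (IH (length q + 2)); auto; [lia | simpl; rewrite length_app; simpl; lia | lia].
  - intros _. apply (dist_le_mono _ _ _ _ Hxz). lia.
  - intros _. apply (dist_le_mono _ _ _ _ Hzy). lia.
Qed.

Lemma Delta_le_mono n k k' : Delta_le S n k -> k <= k' -> Delta_le S n k'.
Proof. intros H Hk g0 w Hn Hw Hc. eapply ktri_mono; eauto. Qed.

Lemma ceil3_spec n : n <= 3 * ceil3 n <= n + 2.
Proof.
  unfold ceil3. pose proof (Nat.div_mod (n + 2) 3 ltac:(lia)).
  pose proof (Nat.mod_upper_bound (n + 2) 3 ltac:(lia)). lia.
Qed.

(* If neither side of the base triangle cuts off between k and 2k - 1 vertices, one of the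
   two sub-polygons still has at least 2k + 2 vertices. *)
Lemma ktri_long_chord k l :
  ktri S k l -> 1 <= k -> 2 * k + 2 <= length l ->
  exists L1 a M b L3, l = L1 ++ a :: M ++ b :: L3 /\ dist_le S a b k /\
                      k <= length M /\ length M + 1 <= 2 * k.
Proof.
  intros H Hk. induction H as [l Hs | x p z q y H1 IH1 H2 IH2 D1 D2]; intro Hl; [lia|].
  simpl in Hl. rewrite length_app in Hl. simpl in Hl. rewrite length_app in Hl. simpl in Hl.
  destruct (le_lt_dec k (length p)) as [Hpk|Hpk].
  - destruct (le_lt_dec (length p + 1) (2 * k)).
    + exists [], x, p, z, (q ++ [y]). repeat split; auto; try lia.
      apply D1. intros ->. simpl in Hpk. lia.
    + destruct IH1 as (L1 & a & M & b & L3 & E & Hd & HM);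
        [simpl; rewrite length_app; simpl; lia|].
      exists L1, a, M, b, (L3 ++ q ++ [y]). repeat split; auto; try lia.
      transitivity ((x :: p ++ [z]) ++ q ++ [y]); [simpl; now rewrite <- app_assoc|].
      rewrite E. now repeat (rewrite <- app_assoc || rewrite <- app_comm_cons).
  - destruct (le_lt_dec (length q + 1) (2 * k)).
    + exists (x :: p), z, q, y, []. repeat split; auto; try lia.
      apply D2. intros ->. simpl in Hl. lia.
    + destruct IH2 as (L1 & a & M & b & L3 & E & Hd & HM);
        [simpl; rewrite length_app; simpl; lia|].
      exists (x :: p ++ L1), a, M, b, L3. repeat split; auto; try lia.
      simpl. rewrite E. now rewrite <- app_assoc.
Qed.

Hypothesis HSinv : forall s, In s S -> In (inv s) S.

Lemma dist_le_sym (a b : G) k : dist_le S a b k -> dist_le S b a k.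
Proof.
  intros (w & Hw & Hl & Hp). exists (rev (map inv w)). repeat split.
  - apply Forall_rev, Forall_map. eapply Forall_impl; [|exact Hw]. exact HSinv.
  - now rewrite length_rev, length_map.
  - now rewrite prodw_rev_map_inv, Hp, inv_mul, inv_involutive.
Qed.

(* The closing vertex y is written at both ends, so that arcs may pass through the base
   side; the chord from the first vertex x to the apex z is measured the other way round. *)
Lemma ktri_of_closed_arc_bounded k l y :
  arc_bounded (y :: l ++ [y]) -> length l < 3 * k -> ktri S k (l ++ [y]).
Proof.
  intros Harc Hl.
  destruct (le_lt_dec (length l) (2 * k)) as [Hs|Hb].
  - apply ktri_of_arc_bounded; [|rewrite length_app; simpl; lia].
    apply (arc_bounded_infix [y] _ []). now rewrite app_nil_r.
  - destruct (list_split_at l (length l - k)) as (x & p & z & q & -> & Hp & Hq); [lia|].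
    simpl in Harc |- *. rewrite <- app_assoc in Harc |- *. simpl in Harc |- *.
    destruct (arc_bounded_split [y] x p z q y Harc) as (Hl' & Hr & _ & Hzy).
    assert (Hyx : dist_le S y x 1) by exact (Harc [] y [] x _ eq_refl).
    apply ktri_split.
    + apply ktri_of_arc_bounded; auto. simpl. rewrite length_app. simpl. lia.
    + apply ktri_of_arc_bounded; auto. simpl. rewrite length_app. simpl. lia.
    + intros _. apply dist_le_sym, (dist_le_mono _ _ _ _ (dist_le_trans _ _ _ _ _ Hzy Hyx)).
      lia.
    + intros _. apply (dist_le_mono _ _ _ _ Hzy). lia.
Qed.

Lemma Delta_le_ceil3 n : Delta_le S n (ceil3 n).
Proof.
  intros g0 w Hn Hw Hc.
  destruct (exists_last (l := w)) as (w0 & t & ->); [intros ->; simpl in Hn; lia|].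
  pose proof (arc_bounded_labels g0 _ Hw) as Harc.
  rewrite labels_snoc, Hc in Harc |- *.
  rewrite length_app in Hn. simpl in Hn. pose proof (ceil3_spec n).
  apply ktri_of_closed_arc_bounded; [exact Harc | rewrite labels_length; lia].
Qed.

End Triangulations.

Section FreeGroup.
Variable G : group.
Implicit Types u v w c x y : list (letter G).

Lemma winv_app u v : winv (u ++ v) = winv v ++ winv u.
Proof. unfold winv. now rewrite map_app, rev_app_distr. Qed.

Lemma winv_length u : length (winv u) = length u.
Proof. unfold winv. now rewrite length_rev, length_map. Qed.

Lemma winv_involutive u : winv (winv u) = u.
Proof.
  unfold winv. rewrite map_rev, rev_involutive, map_map.
  rewrite <- map_id. apply map_ext. intros [s b]. unfold linv. simpl.
  now rewrite Bool.negb_involutive.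
Qed.

Lemma evalw_app u v : evalw (u ++ v) = mul (evalw u) (evalw v).
Proof. unfold evalw. rewrite map_app. apply prodw_app. Qed.

Lemma evalw_winv u : evalw (winv u) = inv (evalw u).
Proof.
  unfold evalw, winv. rewrite map_rev, map_map.
  change (fold_right mul one ?l) with (prodw l). rewrite <- prodw_rev_map_inv, map_map.
  f_equal. f_equal. apply map_ext. intros [s [|]]; unfold leval, linv; simpl; auto.
  symmetry. apply inv_involutive.
Qed.

Lemma evalw_positive (w : list G) : evalw (map (fun s => (s, true)) w) = prodw w.
Proof. unfold evalw. now rewrite map_map, map_id. Qed.

#[local] Instance freeeq_Equivalence : Equivalence (@freeeq G).
Proof. split; [exact (rst_refl _ _) | exact (rst_sym _ _) | exact (rst_trans _ _)]. Qed.

#[local] Instance app_freeeq_Proper : Proper (freeeq ==> freeeq ==> freeeq) (@app (letter G)).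
Proof.
  assert (Hl : forall x y z, freeeq x y -> freeeq (x ++ z) (y ++ z)).
  { intros x y z H. induction H as [x y [u a v] | | |]; try (now econstructor; eauto).
    apply rst_step. rewrite <- !app_assoc. constructor. }
  assert (Hr : forall x y z, freeeq x y -> freeeq (z ++ x) (z ++ y)).
  { intros x y z H. induction H as [x y [u a v] | | |]; try (now econstructor; eauto).
    apply rst_step. rewrite !app_assoc. constructor. }
  intros x y Hxy z t Hzt. transitivity (y ++ z); auto.
Qed.

Lemma freeeq_cancel c y : freeeq (c ++ winv c ++ y) y.
Proof.
  revert y; induction c as [|a c IH]; intro y; [reflexivity|].
  change (winv (a :: c)) with (winv c ++ [linv a]).
  rewrite <- app_assoc. change (freeeq ([a] ++ c ++ winv c ++ [linv a] ++ y) y).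
  rewrite IH. apply rst_step. exact (fred_step G [] a y).
Qed.

Lemma freeeq_cancel_inv c y : freeeq (winv c ++ c ++ y) y.
Proof. rewrite <- (winv_involutive c) at 2. apply freeeq_cancel. Qed.

Lemma freeeq_conj_prod c L :
  freeeq (winv c ++ conj_prod L ++ c)
         (conj_prod (map (fun t => (winv c ++ fst (fst t), snd (fst t), snd t)) L)).
Proof.
  induction L as [|[[u r] b] L IH]; simpl.
  - rewrite <- (app_nil_r c) at 2. apply freeeq_cancel_inv.
  - rewrite <- IH, winv_app, winv_involutive, <- !app_assoc, freeeq_cancel.
    reflexivity.
Qed.

Variables (S : list G) (R : list (list (letter G))).

Lemma letters_in_S_winv u : letters_in_S S u -> letters_in_S S (winv u).
Proof. intro H. apply Forall_rev, Forall_map. exact H. Qed.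

Lemma conseq_le_mono v m m' : conseq_le S R v m -> m <= m' -> conseq_le S R v m'.
Proof. intros (L & Hm & HL & Hv) Hm'. exists L. repeat split; auto; lia. Qed.

Lemma conseq_le_freeeq v v' m : freeeq v v' -> conseq_le S R v m -> conseq_le S R v' m.
Proof. intros H (L & Hm & HL & Hv). exists L. repeat split; auto. now rewrite <- H. Qed.

Lemma conseq_le_relator r : In r R -> conseq_le S R r 1.
Proof.
  intro Hr. exists [([], r, true)]. split; [auto|split; [now repeat constructor|]].
  simpl. now rewrite !app_nil_r.
Qed.

Lemma conseq_le_app v1 v2 m1 m2 :
  conseq_le S R v1 m1 -> conseq_le S R v2 m2 -> conseq_le S R (v1 ++ v2) (m1 + m2).
Proof.
  intros (L1 & Hm1 & HL1 & Hv1) (L2 & Hm2 & HL2 & Hv2). exists (L1 ++ L2).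
  unfold conj_prod. rewrite length_app, Forall_app, flat_map_app, Hv1, Hv2.
  repeat split; auto; [lia | reflexivity].
Qed.

Lemma conseq_le_conj c v m :
  letters_in_S S c -> conseq_le S R v m -> conseq_le S R (winv c ++ v ++ c) m.
Proof.
  intros Hc (L & Hm & HL & Hv).
  exists (map (fun t => (winv c ++ fst (fst t), snd (fst t), snd t)) L).
  rewrite length_map, Forall_map, Hv, freeeq_conj_prod.
  split; [exact Hm | split; [|reflexivity]].
  eapply Forall_impl; [|exact HL]. intros [[u r] b] [Hu Hr]; simpl in *.
  split; auto. apply Forall_app. split; auto. now apply letters_in_S_winv.
Qed.

(* Cutting along a chord P of a relator w1 w2 w3, where P and w2 have the same
   endpoints: w1 w2 w3 = (w1 P w3) (P w3)^-1 (w2 P^-1) (P w3) in the free group. *)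
Lemma conseq_le_split w1 w2 w3 P m1 m2 :
  letters_in_S S (P ++ w3) ->
  conseq_le S R (w1 ++ P ++ w3) m1 -> conseq_le S R (w2 ++ winv P) m2 ->
  conseq_le S R (w1 ++ w2 ++ w3) (m1 + m2).
Proof.
  intros Hc K1 K2.
  apply (conseq_le_freeeq ((w1 ++ P ++ w3) ++ winv (P ++ w3) ++ (w2 ++ winv P) ++ P ++ w3)).
  - rewrite <- (app_assoc w1 (P ++ w3)), freeeq_cancel, <- !app_assoc, freeeq_cancel_inv.
    reflexivity.
  - apply conseq_le_app; [exact K1|]. now apply conseq_le_conj.
Qed.

End FreeGroup.

Lemma bounded_words_finite {A : Type} (alph : list A) N :
  exists W, forall u, Forall (fun a => In a alph) u -> length u <= N -> In u W.
Proof.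
  induction N as [|N [W HW]].
  - exists [[]]. intros [|a u] _ Hu; simpl in *; [auto | lia].
  - exists ([] :: flat_map (fun a => map (cons a) W) alph).
    intros [|a u] Hu Hl; [now left|right]. inversion Hu; subst.
    apply in_flat_map. exists a. split; auto. apply in_map, HW; auto. simpl in Hl; lia.
Qed.

Lemma classical_filter {A : Type} (P : A -> Prop) (l : list A) :
  exists l', forall x, In x l' <-> In x l /\ P x.
Proof.
  induction l as [|a l [l' IH]]; [exists []; simpl; tauto|].
  destruct (classic (P a)) as [Ha|Ha]; [exists (a :: l') | exists l']; intro x; simpl;
    rewrite IH; intuition congruence.
Qed.

Lemma short_relators_finite (G : group) (S : list G) N0 :
  exists R : list (list (letter G)),
    Forall (fun r => letters_in_S S r /\ evalw r = one) R /\
    forall u, letters_in_S S u -> length u <= N0 -> evalw u = one -> In u R.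
Proof.
  destruct (bounded_words_finite (list_prod S [true; false]) N0) as [W HW].
  destruct (classical_filter (fun r => letters_in_S S r /\ evalw r = one) W) as [R HR].
  exists R. split.
  - apply Forall_forall. intros r Hr. now apply HR in Hr.
  - intros u Hu Hl Hev. apply HR. repeat split; auto. apply HW; auto.
    eapply Forall_impl; [|exact Hu]. intros [s b] Hs. apply in_prod; auto.
    destruct b; simpl; auto.
Qed.

Lemma pow2_add_le a b n : a < n -> b < n -> 2 ^ a + 2 ^ b <= 2 ^ n.
Proof.
  intros Ha Hb. destruct n as [|n]; [lia|].
  pose proof (Nat.pow_le_mono_r 2 a n ltac:(lia) ltac:(lia)).
  pose proof (Nat.pow_le_mono_r 2 b n ltac:(lia) ltac:(lia)).
  rewrite Nat.pow_succ_r'. lia.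
Qed.

Section Isoperimetry.
Variables (G : group) (S : list G).
Hypothesis HSinv : forall s, In s S -> In (inv s) S.
Variables (R : list (list (letter G))) (N0 : nat).
Hypothesis HR_short :
  forall u, letters_in_S S u -> length u <= N0 -> evalw u = one -> In u R.
Hypothesis HDelta :
  forall n, N0 < n -> exists k, 1 <= k /\ 3 * k + 1 <= n /\ Delta_le S n k.

Lemma letters_in_S_leval u : letters_in_S S u -> Forall (inS S) (map leval u).
Proof.
  intro Hu. apply Forall_map. eapply Forall_impl; [|exact Hu].
  intros [s [|]] Hs; [exact Hs | now apply HSinv].
Qed.

Lemma relator_cut u :
  letters_in_S S u -> evalw u = one -> N0 < length u ->
  exists w1 w2 w3 P, u = w1 ++ w2 ++ w3 /\ letters_in_S S P /\ evalw P = evalw w2 /\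
                     length P < length w2 /\ length w2 + length P < length u.
Proof.
  intros Hu Hev Hn.
  destruct (HDelta (length u) Hn) as (k & Hk1 & Hk & HD).
  assert (Htri : ktri S k (labels one (map leval u))).
  { apply HD; [rewrite length_map; lia | now apply letters_in_S_leval | now rewrite mul1g]. }
  destruct (ktri_long_chord G S k _ Htri Hk1) as (L1 & a & M & b & L3 & E & Hab & HM);
    [rewrite labels_length, length_map; lia|].
  destruct (labels_cons_chord G (map leval u) one (one :: L1) a M b L3)
    as (v1 & v2 & v3 & Ev & Hv2 & Hp); [now rewrite E|].
  destruct (map_eq_app _ _ _ _ Ev) as (w1 & w23 & -> & _ & E23).
  destruct (map_eq_app _ _ _ _ E23) as (w2 & w3 & -> & <- & _).
  destruct Hab as (c & Hc & Hcl & Hcp).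
  exists w1, w2, w3, (map (fun s => (s, true)) c). rewrite length_map in Hv2 |- *.
  rewrite !length_app in Hk |- *.
  repeat split; [apply Forall_map; exact Hc | | lia | lia].
  rewrite evalw_positive, Hcp, <- Hp. reflexivity.
Qed.

Lemma conseq_le_pow2 u :
  letters_in_S S u -> evalw u = one -> conseq_le S R u (2 ^ length u).
Proof.
  induction u as [u IH] using (induction_ltof1 _ (@length _)). unfold ltof in IH.
  intros Hu Hev.
  destruct (le_lt_dec (length u) N0) as [Hs|Hl].
  { apply (conseq_le_mono _ _ _ _ 1); [now apply conseq_le_relator, HR_short|].
    apply (Nat.pow_le_mono_r 2 0); lia. }
  destruct (relator_cut u Hu Hev Hl) as (w1 & w2 & w3 & P & -> & HP & HevP & HlP & Hl2).
  unfold letters_in_S in Hu. rewrite !Forall_app in Hu. destruct Hu as (Hu1 & Hu2 & Hu3).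
  rewrite !evalw_app in Hev. rewrite !length_app in Hl2 |- *.
  apply (conseq_le_mono _ _ _ _ (2 ^ length (w1 ++ P ++ w3) + 2 ^ length (w2 ++ winv P))).
  - apply (conseq_le_split G S R w1 w2 w3 P); [now apply Forall_app|..]; apply IH.
    + rewrite !length_app. lia.
    + now apply Forall_app; split; [|apply Forall_app].
    + now rewrite !evalw_app, HevP.
    + rewrite !length_app, winv_length. lia.
    + apply Forall_app. split; [exact Hu2 | now apply letters_in_S_winv].
    + now rewrite evalw_app, evalw_winv, HevP, mulgV.
  - rewrite !length_app, winv_length. apply pow2_add_le; lia.
Qed.

End Isoperimetry.

Theorem theoremA (G : group) (S : list G)
  (HSinv : forall s, In s S -> In (inv s) S)
  (HSgen : forall g : G, exists w : list G, Forall (inS S) w /\ prodw w = g) :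
  (forall n, 1 <= n -> Delta_le S n (ceil3 n)) /\
  ((exists N, forall n, 1 <= n -> N <= n ->
        exists k, k < ceil3 n /\ Delta_le S n k) ->
   exists R : list (list (letter G)),
     (* <S | R> is a finite presentation of G *)
     Forall (fun r => letters_in_S S r /\ evalw r = one) R /\
     (forall u : list (letter G), letters_in_S S u -> evalw u = one ->
        exists m, conseq_le S R u m) /\
     (* exponential isoperimetric inequality *)
     exists c : nat, forall w : list G, Forall (inS S) w -> prodw w = one ->
        conseq_le S R (map (fun s => (s, true)) w) (c ^ length w)).
Proof.
  split; [intros n _; now apply Delta_le_ceil3|].
  intros [N HN].
  destruct (short_relators_finite G S (N + 4)) as (R & HRrel & HRshort).
  assert (HDelta : forall n, N + 4 < n ->
                   exists k, 1 <= k /\ 3 * k + 1 <= n /\ Delta_le S n k).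
  { intros n Hn. destruct (HN n) as (k & Hk & HD); [lia | lia|].
    pose proof (ceil3_spec n). exists (Nat.max k 1).
    repeat split; [lia | lia | apply (Delta_le_mono G S n k); auto; lia]. }
  pose proof (conseq_le_pow2 G S HSinv R (N + 4) HRshort HDelta) as Hiso.
  exists R. split; [exact HRrel|]. split.
  - intros u Hu Hev. exists (2 ^ length u). now apply Hiso.
  - exists 2. intros w Hw Hev. rewrite <- (length_map (fun s => (s, true)) w).
    apply Hiso; [now apply Forall_map | now rewrite evalw_positive].
Qed.
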